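(* Let $k\geq 2$ be an integer and let $G$ be a graph on $n$ vertices with minimum degree $\delta=\delta(G)>\frac{(k-1)n}{k}$. Suppose $V(G)$ is partitioned into classes $U_1,U_2,X_1,\dots,X_{k-1},A$ such that (a) there are no edges between $U_1$ and $U_2$; (b) all copies of $K_k$ in $G$ consisting of an edge of $G[U_1]$ together with one vertex from each of $X_1,\dots,X_{k-2}$ are pairwise $K_{k+1}$-connected; (c) $|X_i|\leq n-\delta$ for $i\in[k-1]$; (d) $X_i\cap\Gamma(g)$ is an independent set for each $i\in[k-2]$ and each copy $g$ of $K_{i+1}$ consisting of an edge of $G[U_1]$ together with one vertex from each of $X_1,\dots,X_{i-1}$. Let $F$ be a matching in $G[U_1]$ and set $q:=k\delta-(k-1)n+|U_2|-|U_1|-|A|$. Then $G$ contains a connected $K_{k+1}$-factor of size at least $(k+1)\min\{|F|,q\}$.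
   Context: A $K_{k+1}$-walk in $G$ is a sequence of copies of $K_k$ in which consecutive copies lie in a common copy of $K_{k+1}$; its endpoints are then $K_{k+1}$-connected; the equivalence classes of copies of $K_k$ are the $K_{k+1}$-components. A $K_{k+1}$-factor is a set of vertex-disjoint copies of $K_{k+1}$; it is connected if all copies of $K_k$ contained in its members lie in one component; its size is the number of vertices it covers. $\Gamma(g)$ is the common neighbourhood of the vertices of $g$. *)

From mathcomp Require Import all_boot all_order all_algebra.
Set Implicit Arguments. Unset Strict Implicit. Unset Printing Implicit Defensive.

Section Graphs.
Variable T : finType.
Variable e : rel T.

Definition simple_graph := symmetric e /\ irreflexive e.

Definition deg (v : T) : nat := #|[set u | e v u]|.

(* minimum degree delta(G) (for nonempty vertex set; deg v < #|T| always) *)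
Definition mindeg : nat := \big[minn/#|T|]_(v : T) deg v.

Definition clique (S : {set T}) : bool :=
  [forall x in S, forall y in S, (x != y) ==> e x y].

Definition Kcopy (r : nat) (S : {set T}) : bool := clique S && (#|S| == r).

Definition kstep (k : nat) (g h : {set T}) : bool :=
  [&& Kcopy k g, Kcopy k h &
      [exists S : {set T}, [&& Kcopy k.+1 S, g \subset S & h \subset S]]].

Definition kconnected (k : nat) (g h : {set T}) : bool :=
  [&& Kcopy k g, Kcopy k h & connect (kstep k) g h].

Definition Gamma (g : {set T}) : {set T} := [set v | [forall u in g, e u v]].

Definition independent (S : {set T}) : bool :=
  [forall x in S, forall y in S, ~~ e x y].

Definition Kfactor (k : nat) (FF : {set {set T}}) : bool :=
  [forall S in FF, Kcopy k.+1 S] && trivIset FF.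

Definition connected_Kfactor (k : nat) (FF : {set {set T}}) : Prop :=
  Kfactor k FF /\
  forall S1 S2 g1 g2 : {set T}, S1 \in FF -> S2 \in FF ->
    g1 \subset S1 -> g2 \subset S2 -> #|g1| = k -> #|g2| = k ->
    kconnected k g1 g2.

Definition factor_size (FF : {set {set T}}) : nat := #|cover FF|.

(* g is a copy of K_{j+1} consisting of an edge of G[U1] together with
   one vertex from each of X 1, ..., X (j-1) *)
Definition layered (U1 : {set T}) (X : nat -> {set T}) (j : nat)
    (g : {set T}) : bool :=
  [&& clique g, #|g :&: U1| == 2,
      [forall i : 'I_j, (0 < (i : nat)) ==> (#|g :&: X i| == 1)] &
      g \subset U1 :|: \bigcup_(i < j | 0 < (i : nat)) X i].

Definition matching_in (U1 : {set T}) (F : {set {set T}}) : bool :=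
  [forall f in F, [&& #|f| == 2, clique f & f \subset U1]] && trivIset F.

End Graphs.

From mathcomp Require Import all_boot all_order all_algebra zify.
Import Order.TTheory GRing.Theory Num.Theory.
Set Implicit Arguments. Unset Strict Implicit. Unset Printing Implicit Defensive.

(* The factor is built greedily, one matching edge at a time.  An edge f of
   G[U1] is grown into a copy of K_(k+1) by adding, for i = 1, ..., k - 1, a
   vertex x_i of X_i that is a common neighbour of the clique g built so far
   and is not yet covered.  If g has i + 1 vertices, then
   |Gamma(g)| >= (i + 1) delta - i n + |U2|; Gamma(g) misses U2 by (a), misses
   X_1, ..., X_(i-1) by (d), and meets X_(i+1), ..., X_(k-1) in at most
   (k - 1 - i)(n - delta) vertices by (c).  Hence Gamma(g) meets X_i in at
   least q vertices, of which fewer than q are covered as long as fewer than q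
   cliques have been built.  Each clique contains a copy of K_k as in (b), so
   the factor is connected. *)

Lemma card_bigcup_leq (T : finType) (I : Type) (r : seq I) (P : pred I)
    (F : I -> {set T}) :
  #|\bigcup_(i <- r | P i) F i| <= \sum_(i <- r | P i) #|F i|.
Proof.
elim/big_rec2: _ => [|i n U _ leUn]; first by rewrite cards0.
by rewrite (leq_trans (leq_card_setU (F i) U).1) ?leq_add2l.
Qed.

Lemma mem_bigcup_seq (T : finType) (I : eqType) (r : seq I) (P : pred I)
    (F : I -> {set T}) i x :
  i \in r -> P i -> x \in F i -> x \in \bigcup_(j <- r | P j) F j.
Proof. by move=> ir Pi xFi; rewrite (big_rem i) //= Pi inE xFi. Qed.

Lemma setU1I_notin (T : finType) x (B C : {set T}) :
  x \notin C -> (x |: B) :&: C = B :&: C.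
Proof.
move=> xC; apply/setP => v; rewrite !inE.
by case: eqP => // ->; rewrite (negbTE xC) !andbF.
Qed.

Section GraphFacts.
Variables (T : finType) (e : rel T).

Lemma mindeg_leq_deg v : mindeg e <= deg e v.
Proof.
rewrite /mindeg; have : v \in index_enum T by rewrite mem_index_enum.
elim: (index_enum T) => [//|u s IHs]; rewrite inE big_cons.
case/orP=> [/eqP<-|/IHs]; first exact: geq_minl.
exact: leq_trans (geq_minr _ _).
Qed.

Lemma mindeg_leq_card : mindeg e <= #|T|.
Proof.
by rewrite /mindeg; elim/big_rec: _ => // i x _; apply: leq_trans (geq_minr _ _).
Qed.

Lemma Gamma_set1 u : Gamma e [set u] = [set w | e u w].
Proof.
apply/setP=> w; rewrite !inE; apply/forall_inP/idP => [-> //|euw y].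
  by rewrite inE.
by rewrite inE => /eqP->.
Qed.

Lemma Gamma_setU1 x (g : {set T}) :
  Gamma e (x |: g) = Gamma e g :&: [set w | e x w].
Proof.
apply/setP=> w; rewrite !inE; apply/forall_inP/andP => [h|[/forall_inP h exw] y].
  split; last by apply: h; rewrite setU11.
  by apply/forall_inP => y yg; apply: h; rewrite setU1r.
by case/setU1P=> [->|]; last exact: h.
Qed.

Lemma card_Gamma_setU1 x (g : {set T}) :
  #|Gamma e g| + mindeg e <= #|Gamma e (x |: g)| + #|T|.
Proof.
rewrite Gamma_setU1 (leq_trans (leq_add (leqnn _) (mindeg_leq_deg x))) //.
by rewrite /deg -cardsUI addnC leq_add2l max_card.
Qed.

Lemma clique_subset (g S : {set T}) : g \subset S -> clique e S -> clique e g.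
Proof.
move=> /subsetP gS /forall_inP cS; apply/forall_inP => x xg.
by apply/forall_inP => y yg; move/forall_inP: (cS x (gS x xg)); apply; apply: gS.
Qed.

Lemma clique_setU1 x (g : {set T}) :
  symmetric e -> clique e g -> x \in Gamma e g -> clique e (x |: g).
Proof.
move=> esym /forall_inP cg; rewrite inE => /forall_inP xG.
apply/forall_inP => y /setU1P[->|yg]; apply/forall_inP => z /setU1P[->|zg].
- by rewrite eqxx.
- by rewrite esym xG ?implybT.
- by rewrite xG ?implybT.
- by move/forall_inP: (cg y yg); apply.
Qed.

Lemma cover_setU1 (S : {set T}) (FF : {set {set T}}) :
  cover (S |: FF) = S :|: cover FF.
Proof. by rewrite /cover bigcup_setU big_set1. Qed.

Lemma Kfactor_setU1 k (S : {set T}) (FF : {set {set T}}) :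
  Kfactor e k FF -> Kcopy e k.+1 S -> [disjoint S & cover FF] ->
  Kfactor e k (S |: FF).
Proof.
case/andP=> /forall_inP KFF trFF KS SFF.
have FF0 : set0 \notin FF by apply/negP => /KFF /andP[_]; rewrite cards0.
have [|trS _] := trivIsetU1 (A := S) _ trFF FF0.
  by move=> B BFF; apply: disjointWr SFF; apply: bigcup_sup.
by rewrite /Kfactor trS andbT; apply/forall_inP => B /setU1P[->|/KFF].
Qed.

Lemma kstep_in_Kcopy k (S g h : {set T}) :
  Kcopy e k.+1 S -> g \subset S -> h \subset S -> #|g| = k -> #|h| = k ->
  kstep e k g h.
Proof.
move=> /[dup] KS /andP[cS _] gS hS gk hk.
rewrite /kstep /Kcopy gk hk !eqxx !andbT (clique_subset gS) ?(clique_subset hS) //=.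
by apply/existsP; exists S; apply/and3P.
Qed.

Lemma connected_Kfactor_hub k (P : {set T} -> Prop) (FF : {set {set T}}) :
  (forall g h, P g -> P h -> kconnected e k g h) ->
  Kfactor e k FF ->
  (forall S, S \in FF -> exists2 L, P L & L \subset S) ->
  connected_Kfactor e k FF.
Proof.
move=> Pconn KFF hub; split => // S1 S2 g1 g2 S1FF S2FF g1S1 g2S2 g1k g2k.
case/andP: KFF => /forall_inP KFF _.
have [L1 PL1 L1S1] := hub S1 S1FF; have [L2 PL2 L2S2] := hub S2 S2FF.
have /and3P[/andP[_ /eqP L1k] /andP[_ /eqP L2k] L1L2] := Pconn L1 L2 PL1 PL2.
have g1L1 := kstep_in_Kcopy (KFF S1 S1FF) g1S1 L1S1 g1k L1k.
have L2g2 := kstep_in_Kcopy (KFF S2 S2FF) L2S2 g2S2 L2k g2k.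
case/and3P: (g1L1) => Kg1 _ _; case/and3P: (L2g2) => _ Kg2 _.
rewrite /kconnected Kg1 Kg2 (connect_trans (connect1 g1L1)) //.
exact: connect_trans L1L2 (connect1 L2g2).
Qed.

End GraphFacts.

Section GreedyFactor.
Variables (k : nat) (T : finType) (e : rel T).
Variables (U1 U2 A : {set T}) (X : nat -> {set T}).
Hypothesis k_ge2 : 2 <= k.
Hypothesis e_sym : symmetric e.
Hypothesis X_U1 : forall i, 1 <= i <= k - 1 -> [disjoint X i & U1].
Hypothesis X_X : forall i j, 1 <= i <= k - 1 -> 1 <= j <= k - 1 -> i <> j ->
  [disjoint X i & X j].
Hypothesis parts_cover : forall v : T, v \in U1 \/ v \in U2 \/ v \in A \/
  exists2 i, 1 <= i <= k - 1 & v \in X i.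
Hypothesis U1_U2_nonadj : forall u w, u \in U1 -> w \in U2 -> ~~ e u w.
Hypothesis layered_connected : forall g h,
  layered e U1 X (k - 1) g -> layered e U1 X (k - 1) h -> kconnected e k g h.
Hypothesis card_X : forall i, 1 <= i <= k - 1 -> #|X i| <= #|T| - mindeg e.
Hypothesis X_Gamma_independent : forall i g, 1 <= i <= k - 2 ->
  layered e U1 X i g -> independent e (X i :&: Gamma e g).

Local Notation n := #|T|.
Local Notation d := (mindeg e).

(* The paper's q, truncated at 0. *)
Definition excess : nat := k * d + #|U2| - ((k - 1) * n + #|U1| + #|A|).

Lemma layered_mem i (g : {set T}) v : layered e U1 X i g -> v \in g ->
  v \in U1 \/ exists2 l, 0 < l < i & v \in X l.
Proof.
case/and4P => _ _ _ /subsetP/[apply]; rewrite inE.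
case/orP=> [|/bigcupP[l /= l0 vXl]]; [by left | right; exists l => //].
by rewrite l0 ltn_ord.
Qed.

Lemma layered_disjoint_X i l (g : {set T}) : layered e U1 X i g -> i <= l ->
  1 <= l <= k - 1 -> [disjoint g & X l].
Proof.
move=> lay il lk; rewrite disjoint_sym; apply/pred0P => v /=.
apply/andP => -[vXl vg]; case: (layered_mem lay vg) => [vU1|[j /andP[j0 ji] vXj]].
  by rewrite (disjointFr (X_U1 lk) vXl) in vU1.
have jk : 1 <= j <= k - 1 by lia.
by rewrite (disjointFr (X_X jk lk _) vXj) in vXl; lia.
Qed.

Lemma layered_setU1 i (g : {set T}) x :
  1 <= i <= k - 1 -> layered e U1 X i g -> x \in X i :&: Gamma e g ->
  layered e U1 X i.+1 (x |: g).
Proof.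
move=> ik lay /setIP[xXi xG].
have gXi := layered_disjoint_X lay (leqnn i) ik.
have xU1 : x \notin U1 by rewrite (disjointFr (X_U1 ik) xXi).
case/and4P: (lay) => cg gU1 /forallP gX /subsetP gsub.
apply/and4P; split.
- exact: clique_setU1.
- by rewrite setU1I_notin.
- apply/forallP => l; apply/implyP => l0; have [li|il] := ltnP l i.
    rewrite setU1I_notin; first exact: (implyP (gX (Ordinal li))).
    by rewrite (disjointFr (X_X ik _ _) xXi) //; lia.
  have -> : nat_of_ord l = i by have := ltn_ord l; lia.
  have -> : (x |: g) :&: X i = [set x].
    apply/setP => v; rewrite !inE; case: eqP => [->|_] //=.
    by apply/negP => /andP[vg vXi]; rewrite (disjointFr gXi vg) in vXi.
  by rewrite cards1.
- apply/subsetP => v /setU1P[->|vg]; rewrite inE.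
    by apply/orP; right; apply/bigcupP; exists ord_max => //; case/andP: ik.
  case: (layered_mem lay vg) => [->//|[l /andP[l0 li] vXl]].
  by apply/orP; right; apply/bigcupP; exists (Ordinal (ltnW li : l < i.+1)).
Qed.

Definition admissible (C f : {set T}) (i : nat) (g : {set T}) : Prop :=
  [/\ layered e U1 X i g, g :&: U1 = f, [disjoint g & C],
      i.+1 * d + #|U2| <= #|Gamma e g| + i * n &
      forall l, 0 < l < i -> [disjoint Gamma e g & X l]].

Lemma admissible_edge (C f : {set T}) :
  #|f| == 2 -> clique e f -> f \subset U1 -> [disjoint f & C] ->
  admissible C f 1 f.
Proof.
move=> f2 cf fU1 fC; have ff : f :&: U1 = f by apply/setIidPl.
split => //; last by move=> l /andP[l0 l1]; lia.
- apply/and4P; split => //; first by rewrite ff.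
    by apply/forallP => -[[|l] //].
  by apply/subsetP => v /(subsetP fU1) vU1; rewrite inE vU1.
case/cards2P: f2 => u [w [_ fuw]].
have uU1 : u \in U1 by rewrite (subsetP fU1) // fuw !inE eqxx.
have wU1 : w \in U1 by rewrite (subsetP fU1) // fuw !inE eqxx orbT.
have nbrs_U2 : [set v | e w v] :|: [set v | e u v] \subset ~: U2.
  apply/subsetP => v; rewrite !inE; apply: contraTN => vU2.
  by rewrite negb_or !U1_U2_nonadj.
have := subset_leq_card nbrs_U2; have := cardsC U2.
have := cardsUI [set v | e w v] [set v | e u v].
have := mindeg_leq_deg e u; have := mindeg_leq_deg e w.
rewrite fuw Gamma_setU1 Gamma_set1 /deg; lia.
Qed.

Lemma excess_leq_card_X_Gamma (C f : {set T}) i (g : {set T}) :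
  admissible C f i g -> 1 <= i <= k - 1 -> excess <= #|X i :&: Gamma e g|.
Proof.
case=> lay gU1 _ card_Gamma Gamma_X ik.
have [u /setIP[ug uU1]] : exists u, u \in g :&: U1.
  by apply/set0Pn; rewrite -card_gt0; case/and4P: lay => _ /eqP->.
pose Y := \bigcup_(i.+1 <= l < k) X l.
have Gamma_sub : Gamma e g \subset U1 :|: A :|: (X i :&: Gamma e g) :|: Y.
  apply/subsetP => v vG.
  have euv : e u v by move: vG; rewrite inE => /forall_inP->.
  rewrite !in_setU in_setI vG andbT.
  case: (parts_cover v) => [->//|[vU2|[->|[l lk vXl]]]]; rewrite ?orbT //.
    by rewrite (negbTE (U1_U2_nonadj uU1 vU2)) in euv.
  have [li|il|<-] := ltngtP l i; rewrite ?vXl ?orbT //.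
    by rewrite (disjointFr (Gamma_X l _) vG) in vXl; lia.
  by rewrite (mem_bigcup_seq _ _ vXl) ?orbT // mem_index_iota; lia.
have card_Y : #|Y| <= (k - i.+1) * (n - d).
  rewrite (leq_trans (card_bigcup_leq _ _ _)) // -sum_nat_const_nat.
  rewrite big_seq_cond [leqRHS]big_seq_cond; apply: leq_sum => l.
  by rewrite mem_index_iota andbT => lk; apply: card_X; lia.
have card_Gamma_le :
    #|Gamma e g| <= #|U1| + #|A| + #|X i :&: Gamma e g| + #|Y|.
  apply: (leq_trans (subset_leq_card Gamma_sub)).
  by do 3 rewrite (leq_trans (leq_card_setU _ _).1) ?leq_add2r //.
have split_d : (k - i.+1) * d + i.+1 * d = k * d by rewrite -mulnDl subnK //; lia.
have split_n : (k - i.+1) * n + i * n = (k - 1) * n.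
  by rewrite -mulnDl; congr (_ * _); lia.
have : (k - i.+1) * d <= (k - i.+1) * n.
  by rewrite leq_mul2l mindeg_leq_card orbT.
rewrite mulnBr in card_Y; rewrite /excess; lia.
Qed.

Lemma exists_fresh_neighbour (C f : {set T}) i (g : {set T}) :
  admissible C f i g -> 1 <= i <= k - 1 -> #|C :&: X i| < excess ->
  exists2 x, x \in X i :&: Gamma e g & x \notin C.
Proof.
move=> adm ik small.
suff /subsetPn[x xXG xC] : ~~ (X i :&: Gamma e g \subset C) by exists x.
apply: contraTN small => sub; rewrite -leqNgt.
rewrite (leq_trans (excess_leq_card_X_Gamma adm ik)) // subset_leq_card //.
by rewrite subsetI sub subsetIl.
Qed.

Lemma admissible_setU1 (C f : {set T}) i (g : {set T}) x :
  admissible C f i g -> 1 <= i <= k - 2 ->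
  x \in X i :&: Gamma e g -> x \notin C -> admissible C f i.+1 (x |: g).
Proof.
case=> lay gU1 gC card_Gamma Gamma_X ik xXG xC.
have ik1 : 1 <= i <= k - 1 by lia.
have /setIP[xXi xG] := xXG.
split.
- exact: layered_setU1.
- by rewrite setU1I_notin // (disjointFr (X_U1 ik1) xXi).
- by rewrite disjoints_subset subUset sub1set inE xC -disjoints_subset.
- have := card_Gamma_setU1 e x g; rewrite !mulSn; lia.
move=> l /andP[l0]; rewrite ltnS leq_eqVlt => /orP[/eqP->|li].
  rewrite Gamma_setU1 disjoints_subset; apply/subsetP => v /setIP[vG].
  rewrite !inE => exv; apply/negP => vXi.
  have /forall_inP/(_ x xXG)/forall_inP/(_ v) := X_Gamma_independent ik lay.
  by rewrite inE vXi vG exv => /(_ isT).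
by apply: disjointWl (Gamma_X l _); rewrite ?Gamma_setU1 ?subsetIl ?l0.
Qed.

Definition sparse_on_X (C : {set T}) : Prop :=
  forall l, 1 <= l <= k - 1 -> #|C :&: X l| < excess.

Lemma exists_admissible (C f : {set T}) : sparse_on_X C ->
  admissible C f 1 f -> forall j, j <= k - 2 -> exists g, admissible C f j.+1 g.
Proof.
move=> sparseC adm_f; elim=> [|j IHj] jk; first by exists f.
have [g adm_g] := IHj (ltnW jk).
have jk1 : 1 <= j.+1 <= k - 1 by lia.
have [x xXG xC] := exists_fresh_neighbour adm_g jk1 (sparseC _ jk1).
by exists (x |: g); apply: admissible_setU1 => //; lia.
Qed.

Lemma exists_Kcopy_on_edge (C f : {set T}) :
  #|f| == 2 -> clique e f -> f \subset U1 -> [disjoint f & C] -> sparse_on_X C ->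
  exists S, [/\ Kcopy e k.+1 S, exists2 L, layered e U1 X (k - 1) L & L \subset S,
     S :&: U1 = f, [disjoint S & C] &
     forall l, 1 <= l <= k - 1 -> #|S :&: X l| <= 1].
Proof.
move=> f2 cf fU1 fC sparseC.
have k21 : (k - 2).+1 = k - 1 by lia.
have [L] := exists_admissible sparseC (admissible_edge f2 cf fU1 fC) (leqnn (k - 2)).
rewrite k21 => /[dup] adm_L [lay_L LU1 LC _ _].
have kk : 1 <= k - 1 <= k - 1 by lia.
have [x xXG xC] := exists_fresh_neighbour adm_L kk (sparseC _ kk).
have /setIP[xX _] := xXG.
have lay_S := layered_setU1 kk lay_L xXG.
rewrite (_ : (k - 1).+1 = k) in lay_S; last by lia.
have xL : x \notin L.
  by rewrite (disjointFl (layered_disjoint_X lay_L (leqnn _) kk) xX).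
case/and3P: (layered_connected lay_L lay_L) => /andP[_ /eqP Lk] _ _.
case/and4P: (lay_S) => cS _ /forallP SX _.
exists (x |: L); split => //.
- by rewrite /Kcopy cS cardsU1 xL Lk add1n eqxx.
- by exists L => //; apply: subsetUr.
- by rewrite setU1I_notin // (disjointFr (X_U1 kk) xX).
- by rewrite disjoints_subset subUset sub1set inE xC -disjoints_subset.
move=> l lk; have lk' : l < k by lia.
by have /implyP/(_ (proj1 (andP lk)))/eqP-> := SX (Ordinal lk').
Qed.

Record greedy_state (F F' FF : {set {set T}}) (m : nat) : Prop := GreedyState {
  greedy_used_sub : F' \subset F;
  greedy_card_used : #|F'| = m;
  greedy_Kfactor : Kfactor e k FF;
  greedy_anchored : forall S, S \in FF ->
    exists2 L, layered e U1 X (k - 1) L & L \subset S;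
  greedy_card_cover : #|cover FF| = k.+1 * m;
  greedy_cover_U1 : cover FF :&: U1 \subset cover F';
  greedy_cover_X : forall l, 1 <= l <= k - 1 -> #|cover FF :&: X l| <= m }.

Lemma greedy_state0 F : greedy_state F set0 set0 0.
Proof.
split; rewrite /cover ?big_set0.
- exact: sub0set.
- exact: cards0.
- apply/andP; split; first by apply/forall_inP => S; rewrite inE.
  by rewrite /trivIset /cover !big_set0 cards0.
- by move=> S; rewrite inE.
- by rewrite cards0 muln0.
- by rewrite set0I sub0set.
- by move=> l _; rewrite set0I cards0.
Qed.

Lemma greedy_state_step F F' FF m :
  matching_in e U1 F -> greedy_state F F' FF m -> m < #|F| -> m < excess ->
  exists F'' FF', greedy_state F F'' FF' m.+1.
Proof.
case/andP=> /forall_inP matchF trF.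
case=> F'F F'm KFF anchFF coverFF coverU1 coverX mF mq.
have [f fF fF'] : exists2 f, f \in F & f \notin F'.
  by apply/subsetPn; apply: contraTN mF => /subset_leq_card; rewrite F'm -leqNgt.
have /and3P[f2 cf fU1] := matchF f fF.
have f_cover : [disjoint f & cover FF].
  rewrite disjoints_subset; apply/subsetP => v vf; rewrite inE; apply/negP => vFF.
  have /bigcupP[f' f'F' vf'] : v \in cover F'.
    by rewrite (subsetP coverU1) // inE vFF (subsetP fU1).
  have ff' : f != f' by apply: contraNneq fF' => ->.
  have ff'_disj := trivIsetP trF f f' fF (subsetP F'F f' f'F') ff'.
  by rewrite (disjointFr ff'_disj vf) in vf'.
have sparseFF : sparse_on_X (cover FF).
  by move=> l lk; apply: leq_ltn_trans (coverX l lk) mq.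
have [S [KS anchS SU1 S_cover SX]] :=
  exists_Kcopy_on_edge f2 cf fU1 f_cover sparseFF.
exists (f |: F'), (S |: FF); split.
- by rewrite subUset sub1set fF F'F.
- by rewrite cardsU1 fF' F'm.
- exact: Kfactor_setU1.
- by move=> S' /setU1P[->|/anchFF].
- rewrite cover_setU1 cardsU (disjoint_setI0 S_cover) cards0 subn0 coverFF.
  by case/andP: KS => _ /eqP->; rewrite mulnS.
- by rewrite !cover_setU1 setIUl SU1 setUS.
move=> l lk; rewrite cover_setU1 setIUl (leq_trans (leq_card_setU _ _).1) //.
exact: leq_add (SX l lk) (coverX l lk).
Qed.

Lemma exists_greedy_state F m : matching_in e U1 F -> m <= minn #|F| excess ->
  exists F' FF, greedy_state F F' FF m.
Proof.
move=> matchF; elim: m => [|m IHm].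
  by exists set0, set0; apply: greedy_state0.
rewrite leq_min => /andP[mF mq].
have [F' [FF st]] : exists F' FF, greedy_state F F' FF m.
  by apply: IHm; rewrite leq_min (ltnW mF) (ltnW mq).
exact: greedy_state_step st mF mq.
Qed.

End GreedyFactor.

Theorem lemma5p6 (k : nat) (T : finType) (e : rel T)
  (U1 U2 A : {set T}) (X : nat -> {set T}) (F : {set {set T}}) :
  (2 <= k)%N ->
  simple_graph e ->
  (* delta(G) > (k-1) n / k *)
  ((k - 1) * #|T| < k * mindeg e)%N ->
  (* V(G) is partitioned into U1, U2, X 1, ..., X (k-1), A *)
  [disjoint U1 & U2] -> [disjoint U1 & A] -> [disjoint U2 & A] ->
  (forall i, (1 <= i <= k - 1)%N ->
     [&& [disjoint X i & U1], [disjoint X i & U2] & [disjoint X i & A]]) ->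
  (forall i j, (1 <= i <= k - 1)%N -> (1 <= j <= k - 1)%N -> i <> j ->
     [disjoint X i & X j]) ->
  (forall v : T, v \in U1 \/ v \in U2 \/ v \in A \/
     exists2 i, (1 <= i <= k - 1)%N & v \in X i) ->
  (* (a) *)
  (forall u w, u \in U1 -> w \in U2 -> ~~ e u w) ->
  (* (b) *)
  (forall g h, layered e U1 X (k - 1) g -> layered e U1 X (k - 1) h ->
     kconnected e k g h) ->
  (* (c) *)
  (forall i, (1 <= i <= k - 1)%N -> (#|X i| <= #|T| - mindeg e)%N) ->
  (* (d) *)
  (forall i g, (1 <= i <= k - 2)%N -> layered e U1 X i g ->
     independent e (X i :&: Gamma e g)) ->
  matching_in e U1 F ->
  exists FF : {set {set T}},
    connected_Kfactor e k FF /\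
    ((k.+1)%:Z * Num.min (#|F|%:Z)
        ((k * mindeg e)%:Z - ((k - 1) * #|T|)%:Z + #|U2|%:Z - #|U1|%:Z - #|A|%:Z)
      <= (factor_size FF)%:Z)%R.
Proof.
move=> k_ge2 [e_sym _] _ _ _ _ X_parts X_X parts_cover U1_U2 layered_conn card_X
  X_Gamma_indep matchF.
have X_U1 i : 1 <= i <= k - 1 -> [disjoint X i & U1] by case/X_parts/and3P.
have [F' [FF st]] := exists_greedy_state k_ge2 e_sym X_U1 X_X parts_cover U1_U2
  layered_conn card_X X_Gamma_indep matchF (leqnn _).
exists FF; split.
  exact: connected_Kfactor_hub layered_conn (greedy_Kfactor st) (greedy_anchored st).
set q := (_ - _ + _ - _ - _)%R.
have q_le_excess : (q <= (excess k e U1 U2 A)%:Z)%R by rewrite /q /excess; lia.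
rewrite /factor_size (greedy_card_cover st) [Posz (k.+1 * _)]PoszM ler_pM2l //.
by rewrite /minn; case: ltnP => _; rewrite ge_min ?lexx ?q_le_excess ?orbT.
Qed.
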